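(* Let $r\ge3$ and let $\mathscr{G}_N$ be a uniformly random $r$-regular (simple) graph on vertex set $[N]$, $N\in2\mathbb{N}$, with law $\mathbf{P}$. Let $\ell=\ell(N)$ be integers with $\ell<\log_{r-1}(5N)$. Call a vertex $x\in[N]$ $\ell$-good if its $\ell$-neighbourhood $B_\ell(x;\mathscr{G}_N)$ is isomorphic as a rooted graph to the $\ell$-neighbourhood $B_\ell(o;\mathscr T)$ of the root $o$ in the infinite $r$-regular tree $\mathscr T$, and $\ell$-bad otherwise; let $\mathrm{bad}^N_\ell$ be the set of $\ell$-bad vertices. Then there exists a constant $K_2<\infty$ such that for all $z>0$, \[ \mathbf{P}\big(|\mathrm{bad}^N_\ell|\ge r^2(r-1)^{2\ell-2}z\big)\le\frac{K_2}{z}. \] *)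

From mathcomp Require Import all_boot all_order all_algebra.
From mathcomp Require Import boolp reals.
Set Implicit Arguments. Unset Strict Implicit. Unset Printing Implicit Defensive.
Import Order.TTheory GRing.Theory Num.Theory.

Definition graph (N : nat) := {ffun 'I_N -> {set 'I_N}}.

Definition rreg (N r : nat) (g : graph N) : bool :=
  [forall x, (x \notin g x) && (#|g x| == r)] &&
  [forall x, forall y, (y \in g x) == (x \in g y)].

Definition grow N (g : graph N) (A : {set 'I_N}) : {set 'I_N} :=
  A :|: [set y | [exists a in A, y \in g a]].
Definition ball N (g : graph N) (l : nat) (x : 'I_N) : {set 'I_N} :=
  iter l (grow g) [set x].

(* The infinite r-regular tree T: vertices are words [a1;...;ak] with a1 < r
   and ai < r-1 (i >= 2); root o = [::]; edges join a word to its one-letter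
   extensions. The distance from o of w is size w. *)
Definition tvalid (r : nat) (w : seq nat) : bool :=
  if w is a :: t then (a < r) && all (fun b => b < r.-1) t else true.
Definition tchild (u v : seq nat) : bool :=
  (size v == (size u).+1) && (take (size u) v == u).
Definition tadj (u v : seq nat) : bool := tchild u v || tchild v u.

(* B_l(x;g) isomorphic as a rooted graph (induced subgraphs) to B_l(o;T) *)
Definition good N r (g : graph N) (l : nat) (x : 'I_N) : Prop :=
  exists f : 'I_N -> seq nat,
    [/\ f x = [::],
        {in ball g l x &, injective f},
        (forall y, y \in ball g l x -> tvalid r (f y) && (size (f y) <= l)),
        (forall w, tvalid r w -> size w <= l ->
           exists2 y, y \in ball g l x & f y = w) &
        {in ball g l x &, forall y z, (z \in g y) = tadj (f y) (f z)}].

Definition bad_set N r (g : graph N) (l : nat) : {set 'I_N} :=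
  [set x | `[< ~ good r g l x >]].

Definition Prob (R : realType) N r (E : graph N -> bool) : R :=
  (#|[set g : graph N | rreg r g && E g]|%:R / #|[set g : graph N | rreg r g]|%:R)%R.

(* If x is l-bad, exploring g from x along non-backtracking walks indexed by
   the words of the r-regular tree does not yield a rooted isomorphism
   B_l(o;T) -> B_l(x;g), and this can only fail through an edge of g joining
   the endpoints of two such walks of length <= l that is a step of neither.
   Switching that edge uv against a disjoint edge ab (into ua, vb) shows that,
   given the edges of the two walks, it is present with probability <= 2r/N.
   Summing over the O(N r^2 (r-1)^(2l)) pairs of walks gives
   E|bad| = O(r^3 (r-1)^(2l)), and Markov's inequality concludes. When N is
   too small for the switching estimate, |bad| <= N = O((r-1)^(2l)) anyway. *)

From mathcomp Require Import all_boot all_order all_algebra.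
From mathcomp Require Import boolp reals.
From mathcomp Require Import zify ring lra.
Import Order.TTheory GRing.Theory Num.Theory.
Set Implicit Arguments. Unset Strict Implicit. Unset Printing Implicit Defensive.

(** * Switching *)

Lemma card_pairset (T U : finType) (A : {pred T}) (Q : T -> U -> bool) :
  #|[set x : T * U | (x.1 \in A) && Q x.1 x.2]| = \sum_(t in A) #|[set y | Q t y]|.
Proof.
rewrite -sum1dep_card -(pair_big_dep (mem A) Q (fun _ _ => 1)) /=.
by apply: eq_bigr => t _; rewrite sum1dep_card.
Qed.

Section Regular.
Variables (N r : nat) (g : graph N).
Hypothesis hg : rreg r g.

Lemma rreg_loop x : x \notin g x.
Proof. by case/andP: hg => /forallP/(_ x)/andP[]. Qed.

Lemma rreg_card x : #|g x| = r.
Proof. by case/andP: hg => /forallP/(_ x)/andP[_ /eqP]. Qed.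

Lemma rreg_sym x y : (y \in g x) = (x \in g y).
Proof. by case/andP: hg => _ /forallP/(_ x)/forallP/(_ y)/eqP. Qed.

Lemma rreg_neq {x y} : y \in g x -> x != y.
Proof. by apply: contraTneq => ->; apply: rreg_loop. Qed.

Lemma card_darts_from (X : {set 'I_N}) :
  #|[set ab : 'I_N * 'I_N | (ab.1 \in X) && (ab.2 \in g ab.1)]| = #|X| * r.
Proof.
rewrite (card_pairset _ (fun a b => b \in g a)) -sum_nat_const; apply: eq_bigr => a _.
by rewrite -(rreg_card a); apply: eq_card => b; rewrite inE.
Qed.

Lemma card_darts_to (X : {set 'I_N}) :
  #|[set ab : 'I_N * 'I_N | (ab.2 \in X) && (ab.2 \in g ab.1)]| = #|X| * r.
Proof.
rewrite -(card_darts_from X) -(@card_preimset _ (fun ab : 'I_N * 'I_N => (ab.2, ab.1))).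
  by apply: eq_card => -[a b]; rewrite !inE rreg_sym.
by move=> [? ?] [? ?] [-> ->].
Qed.

End Regular.

Lemma cardsD1U1 (T : finType) (S : {set T}) c d :
  c \in S -> d \notin S -> #|S :\ c :|: [set d]| = #|S|.
Proof.
move=> cS dS; rewrite setUC cardsU1 (cardsD1 c S) cS inE negb_and dS orbT.
by rewrite addnC.
Qed.

Definition has_edges N (g : graph N) (Q : seq ('I_N * 'I_N)) :=
  all (fun e => e.2 \in g e.1) Q.

Section Switch.
Variable N : nat.
Implicit Types (g : graph N) (u v a b y z : 'I_N).

Definition switch g u v a b : graph N :=
  [ffun y => if y == u then g u :\ v :|: [set a]
             else if y == v then g v :\ u :|: [set b]
             else if y == a then g a :\ b :|: [set u]
             else if y == b then g b :\ a :|: [set v]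
             else g y].

Definition edge_among u v a b y z :=
  [|| (y == u) && (z == v), (y == v) && (z == u), (y == a) && (z == b) |
      (y == b) && (z == a)].

Lemma edge_amongC u v a b y z : edge_among u v a b y z = edge_among u v a b z y.
Proof.
by rewrite /edge_among; do 4?[case: (y == _)]; do 4?[case: (z == _)].
Qed.

Lemma switch_inE g u v a b y z : uniq [:: u; v; a; b] ->
  (z \in switch g u v a b y) =
  ((z \in g y) && ~~ edge_among u v a b y z) || edge_among u a v b y z.
Proof.
rewrite /= !inE !negb_or -!andbA => /and5P[uv ua ub va /andP[vb /andP[ab _]]].
have [[vu au bu] [av bv ba]] :
    [/\ v != u, a != u & b != u] /\ [/\ a != v, b != v & b != a].
  by split; split; rewrite eq_sym.
rewrite /edge_among ffunE.
case: (y =P u) => [->|/eqP yu]; rewrite ?inE.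
  rewrite ?eqxx ?(negbTE uv) ?(negbTE ua) ?(negbTE ub) /=.
  by case: (z \in g u); case: (z == v); case: (z == a).
rewrite ?(negbTE yu) /=; case: (y =P v) => [->|/eqP yv]; rewrite ?inE.
  rewrite ?eqxx ?(negbTE vu) ?(negbTE va) ?(negbTE vb) /=.
  by case: (z \in g v); case: (z == u); case: (z == b).
rewrite ?(negbTE yv) /=; case: (y =P a) => [->|/eqP ya]; rewrite ?inE.
  rewrite ?eqxx ?(negbTE au) ?(negbTE av) ?(negbTE ab) /=.
  by case: (z \in g a); case: (z == u); case: (z == b).
rewrite ?(negbTE ya) /=; case: (y =P b) => [->|/eqP yb]; rewrite ?inE.
  rewrite ?eqxx ?(negbTE bu) ?(negbTE bv) ?(negbTE ba) /=.
  by case: (z \in g b); case: (z == v); case: (z == a).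
by rewrite ?(negbTE yb) /= ?andbT ?orbF.
Qed.

End Switch.

Section Switching.
Variables (N r : nat) (P : seq ('I_N * 'I_N)) (u v : 'I_N).
Hypotheses (uvP : (u, v) \notin P) (vuP : (v, u) \notin P).
Implicit Types g : graph N.

Definition graphs_with_edge := [set g | [&& rreg r g, has_edges g P & v \in g u]].
Definition graphs_without_edge := [set g | [&& rreg r g, has_edges g P & v \notin g u]].

Definition switchable g (ab : 'I_N * 'I_N) :=
  [&& ab.2 \in g ab.1, ab.1 \notin [set u; v] :|: g u,
      ab.2 \notin [set u; v] :|: g v, ab \notin P & (ab.2, ab.1) \notin P].

Section SwitchEdge.
Variables (g : graph N) (a b : 'I_N).
Hypotheses (gA : g \in graphs_with_edge) (sab : switchable g (a, b)).

Let hg : rreg r g. Proof. by move: gA; rewrite inE => /and3P[]. Qed.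
Let gcP : has_edges g P. Proof. by move: gA; rewrite inE => /and3P[]. Qed.
Let guv : v \in g u. Proof. by move: gA; rewrite inE => /and3P[]. Qed.
Let gab : b \in g a. Proof. by case/and5P: sab. Qed.
Let abP : (a, b) \notin P. Proof. by case/and5P: sab. Qed.
Let baP : (b, a) \notin P. Proof. by case/and5P: sab. Qed.
Let uv : u != v. Proof. exact: (rreg_neq hg guv). Qed.
Let ab : a != b. Proof. exact: (rreg_neq hg gab). Qed.
Let a_out : [&& a != u, a != v & a \notin g u].
Proof. by case/and5P: sab => _ /= + _ _ _; rewrite !inE !negb_or -andbA. Qed.
Let b_out : [&& b != u, b != v & b \notin g v].
Proof. by case/and5P: sab => _ _ /= + _ _; rewrite !inE !negb_or -andbA. Qed.
Let au : u != a. Proof. by case/and3P: a_out => + _ _; rewrite eq_sym. Qed.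
Let av : v != a. Proof. by case/and3P: a_out => _ + _; rewrite eq_sym. Qed.
Let bu : u != b. Proof. by case/and3P: b_out => + _ _; rewrite eq_sym. Qed.
Let bv : v != b. Proof. by case/and3P: b_out => _ + _; rewrite eq_sym. Qed.

Lemma switchE y z : (z \in switch g u v a b y) =
  ((z \in g y) && ~~ edge_among u v a b y z) || edge_among u a v b y z.
Proof. by apply: switch_inE; rewrite /= !inE !negb_or uv au bu av bv ab. Qed.

Lemma edge_among_in y z : edge_among u v a b y z -> z \in g y.
Proof. by case/or4P=> /andP[/eqP-> /eqP->]; rewrite // (rreg_sym hg). Qed.

Lemma edge_among_notin y z : edge_among u a v b y z -> z \notin g y.
Proof.
by case/and3P: a_out b_out => _ _ ? /and3P[_ _ ?];
  case/or4P=> /andP[/eqP-> /eqP->]; rewrite // (rreg_sym hg).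
Qed.

Lemma rreg_switch : rreg r (switch g u v a b).
Proof.
case/and3P: a_out b_out => _ _ agu /and3P[_ _ bgv].
apply/andP; split; apply/forallP => y; last first.
  apply/forallP => z; rewrite !switchE (rreg_sym hg) edge_amongC.
  by rewrite [edge_among u a _ _ y z]edge_amongC.
apply/andP; split.
  rewrite switchE (negbTE (rreg_loop hg y)) /=.
  by apply/negP; case/or4P=> /andP[/eqP-> /eqP e]; move: e au bv => ->; rewrite eqxx.
rewrite ffunE; apply/eqP; case: ifP => _.
  by rewrite cardsD1U1 ?(rreg_card hg).
case: ifP => _; first by rewrite cardsD1U1 ?(rreg_card hg) // (rreg_sym hg).
case: ifP => _; first by rewrite cardsD1U1 ?(rreg_card hg) // (rreg_sym hg).
case: ifP => _; last exact: rreg_card.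
by rewrite cardsD1U1 ?(rreg_card hg) // (rreg_sym hg).
Qed.

Lemma switch_without_edge : switch g u v a b \in graphs_without_edge.
Proof.
rewrite inE rreg_switch switchE /edge_among !eqxx (negbTE au) (negbTE bu) (negbTE uv).
rewrite eq_sym (negbTE av) /= andbF orbF andbT.
apply/allP => -[y z] yzP; rewrite switchE (allP gcP _ yzP) /=.
apply/orP; left; apply/negP; case/or4P=> /andP[/eqP e1 /eqP e2]; move: yzP;
  rewrite e1 e2; apply/negP; [exact: uvP | exact: vuP | exact: abP | exact: baP].
Qed.

Lemma switch_new_edges : (a \in switch g u v a b u) && (b \in switch g u v a b v).
Proof. by rewrite !switchE /edge_among !eqxx !orbT. Qed.

End SwitchEdge.

Lemma switch_inj g1 g2 a b :
  g1 \in graphs_with_edge -> g2 \in graphs_with_edge ->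
  switchable g1 (a, b) -> switchable g2 (a, b) ->
  switch g1 u v a b = switch g2 u v a b -> g1 = g2.
Proof.
move=> A1 A2 s1 s2 e; apply/ffunP => y; apply/setP => z.
case E1: (edge_among u v a b y z).
  by rewrite (edge_among_in A1 s1 E1) (edge_among_in A2 s2 E1).
case E2: (edge_among u a v b y z).
  by rewrite (negbTE (edge_among_notin A1 s1 E2)) (negbTE (edge_among_notin A2 s2 E2)).
by have := switchE A1 s1 y z; rewrite e (switchE A2 s2) E1 E2 /= !andbT !orbF => ->.
Qed.

(* (g, ab) |-> (switch g u v a b, ab) injects these pairs into the pairs
   (g', ab) with g' lacking uv and a, b neighbours of u, v in g'. *)
Lemma sum_card_switchable_le :
  \sum_(g in graphs_with_edge) #|[set ab | switchable g ab]| <=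
  r ^ 2 * #|graphs_without_edge|.
Proof.
pose S := [set x : graph N * ('I_N * 'I_N) |
  (x.1 \in graphs_with_edge) && switchable x.1 x.2].
pose T := [set x : graph N * ('I_N * 'I_N) |
  (x.1 \in graphs_without_edge) && ((x.2.1 \in x.1 u) && (x.2.2 \in x.1 v))].
have -> : \sum_(g in graphs_with_edge) #|[set ab | switchable g ab]| = #|S|.
  by rewrite card_pairset.
have -> : r ^ 2 * #|graphs_without_edge| = #|T|.
  rewrite (card_pairset _ (fun g ab => (ab.1 \in g u) && (ab.2 \in g v))).
  rewrite mulnC -sum_nat_const; apply: eq_bigr => g gB.
  have hg : rreg r g by move: gB; rewrite inE => /and3P[].
  rewrite expnS expn1 -{1}(rreg_card hg u) -(rreg_card hg v) -cardsX.
  by apply: eq_card => -[a b]; rewrite !inE.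
rewrite -(card_in_imset (f := fun x => (switch x.1 u v x.2.1 x.2.2, x.2))); last first.
  move=> [g1 [a1 b1]] [g2 [a2 b2]]; rewrite [_ \in S]in_set [_ \in S]in_set /=.
  move=> /andP[A1 s1] /andP[A2 s2] [e ea eb]; subst a2 b2.
  by rewrite (switch_inj A1 A2 s1 _ e).
apply/subset_leq_card/subsetP => _ /imsetP[[g [a b]] + ->].
rewrite [_ \in S]in_set => /andP[gA sab].
by rewrite [_ \in T]in_set /= switch_without_edge //= switch_new_edges.
Qed.

(* Of the rN darts ab, the non-switchable ones have a in {u, v} :|: g u,
   b in {u, v} :|: g v, or ab or ba in P: at most 2(r+2)r + 2|P| of them. *)
Lemma card_switchable_ge g : g \in graphs_with_edge ->
  r * N <= #|[set ab | switchable g ab]| + (2 * ((r + 2) * r) + 2 * size P).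
Proof.
rewrite inE => /and3P[hg _ _].
have cX w : #|[set u; v] :|: g w| <= r + 2.
  rewrite (leq_trans (leq_card_setU _ _)) // (rreg_card hg) addnC leq_add2l.
  by rewrite cards2 ltnS leq_b1.
pose Pboth := P ++ [seq (e.2, e.1) | e <- P].
have sub : [set ab | (ab.1 \in [set: 'I_N]) && (ab.2 \in g ab.1)] \subset
    [set ab | switchable g ab] :|:
    ([set ab | (ab.1 \in [set u; v] :|: g u) && (ab.2 \in g ab.1)] :|:
     [set ab | (ab.2 \in [set u; v] :|: g v) && (ab.2 \in g ab.1)] :|:
     [set ab | ab \in Pboth]).
  apply/subsetP => -[a b]; rewrite /switchable !inE /= mem_cat => ->.
  case: ((a, b) \in P); rewrite ?orbT //=.
  case baP: ((b, a) \in P); first by rewrite (map_f (fun e => (e.2, e.1)) baP) !orbT.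
  by rewrite !andbT; case: (_ || _ || (a \in g u)); case: (_ || _ || (b \in g v)).
have := subset_leq_card sub; rewrite (card_darts_from hg) cardsT card_ord mulnC.
move/leq_trans; apply; apply: (leq_trans (leq_card_setU _ _)); rewrite leq_add2l.
apply: (leq_trans (leq_card_setU _ _)); apply: leq_add.
  apply: (leq_trans (leq_card_setU _ _)); rewrite mul2n -addnn.
  by apply: leq_add;
    rewrite ?(card_darts_from hg) ?(card_darts_to hg) leq_mul2r cX orbT.
by rewrite cardsE (leq_trans (card_size _)) // size_cat size_map addnn mul2n.
Qed.

Lemma card_graphs_with_edge_le :
  0 < r -> 2 * (2 * ((r + 2) * r) + 2 * size P) <= r * N ->
  N * #|graphs_with_edge| <= 2 * r * #|[set g | rreg r g && has_edges g P]|.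
Proof.
set A := graphs_with_edge; set B := graphs_without_edge.
set c := 2 * ((r + 2) * r) + 2 * size P => r0 hN.
have double_count : #|A| * (r * N) <= r ^ 2 * #|B| + #|A| * c.
  rewrite -!sum_nat_const; apply: leq_trans (leq_add sum_card_switchable_le (leqnn _)).
  by rewrite -big_split; apply: leq_sum => g; apply: card_switchable_ge.
have BC : #|B| <= #|[set g | rreg r g && has_edges g P]|.
  by apply/subset_leq_card/subsetP => g; rewrite !inE => /and3P[-> ->].
have AB : #|A| * (r * N) <= 2 * (r ^ 2 * #|B|).
  have : 2 * (#|A| * c) <= #|A| * (r * N) by rewrite mulnCA leq_mul2l hN orbT.
  lia.
rewrite -(leq_pmul2l r0); move: AB BC.
move: #|A| #|B| #|[set g | _]| => a b C; nia.
Qed.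

End Switching.

(** * Exploring the ball along the tree *)

Fixpoint nonbacktracking {T : eqType} (s : seq T) : bool :=
  if s is a :: t then
    (if t is _ :: c :: _ then (c != a) && nonbacktracking t else true)
  else true.

Lemma nonbacktracking_nth (T : eqType) (x0 : T) s :
  (forall i, i.+2 < size s -> nth x0 s i.+2 != nth x0 s i) -> nonbacktracking s.
Proof.
elim: s => [|a s IH] //; case: s IH => [|b [|c t]] IH H //.
change ((c != a) && nonbacktracking [:: b, c & t]).
by rewrite (H 0 isT) IH // => i; apply: (H i.+1).
Qed.

Definition steps {T : Type} (s : seq T) := zip s (behead s).

Lemma tvalid_rcons r w a :
  tvalid r (rcons w a) = tvalid r w && (a < (if size w == 0 then r else r.-1)).
Proof.
case: w => [|b w] /=; first by rewrite andbT.
by rewrite all_rcons; case: (b < r); case: (a < r.-1); case: (all _ w).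
Qed.

Lemma tvalid_take r w i : tvalid r w -> tvalid r (take i w).
Proof.
case: w => [|b w]; case: i => [|i] //=.
by case/andP=> -> /=; rewrite -{1}(cat_take_drop i w) all_cat => /andP[].
Qed.

Lemma tchild_rcons u c : tchild u (rcons u c).
Proof. by rewrite /tchild size_rcons eqxx -cats1 take_size_cat ?eqxx. Qed.

Lemma tchildP u w : tchild u w -> exists c, w = rcons u c.
Proof.
case/andP=> /eqP sw /eqP tw; exists (nth 0 w (size u)).
by rewrite -{1}[w](take_oversize (leqnn _)) sw (take_nth 0) ?sw // tw.
Qed.

Definition tball r k w := tvalid r w && (size w <= k).

Lemma tball_take r k w i : tvalid r w -> i <= k -> tball r k (take i w).
Proof. by move=> vw ik; rewrite /tball tvalid_take //= size_take; case: ifP; lia. Qed.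

Lemma tball_mono r k k' w : k <= k' -> tball r k w -> tball r k' w.
Proof. by move=> kk /andP[vw sw]; rewrite /tball vw (leq_trans sw). Qed.

Section Exploration.
Variables (N r : nat) (g : graph N) (x : 'I_N).
Hypothesis hg : rreg r g.

Definition fresh_nbrs (par : option 'I_N) (cur : 'I_N) : seq 'I_N :=
  enum (if par is Some p then g cur :\ p else g cur).

(* Reading the word [w] from [cur], the letter [a] moves to the [a]-th
   neighbour other than the vertex just left; [vtx] is the candidate
   isomorphism from B_l(o;T) onto B_l(x;g). *)
Fixpoint explore (par : option 'I_N) (cur : 'I_N) (w : seq nat) :=
  if w is a :: t then explore (Some cur) (nth cur (fresh_nbrs par cur) a) t
  else (par, cur).

Definition vtx w := (explore None x w).2.
Definition parent w := (explore None x w).1.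

Lemma explore_rcons par cur w a : explore par cur (rcons w a) =
  let: (p, c) := explore par cur w in (Some c, nth c (fresh_nbrs p c) a).
Proof. by elim: w par cur => [|b w IH] par cur //=. Qed.

Lemma vtx_rcons w a : vtx (rcons w a) = nth (vtx w) (fresh_nbrs (parent w) (vtx w)) a.
Proof. by rewrite /vtx /parent explore_rcons; case: explore. Qed.

Lemma parent_rcons w a : parent (rcons w a) = Some (vtx w).
Proof. by rewrite /vtx /parent explore_rcons; case: explore. Qed.

Lemma fresh_nbrs_sub par cur y : y \in fresh_nbrs par cur -> y \in g cur.
Proof. by rewrite mem_enum; case: par => [p|] //; rewrite inE => /andP[]. Qed.

Lemma size_fresh_nbrs w : tvalid r w ->
  size (fresh_nbrs (parent w) (vtx w)) = if size w == 0 then r else r.-1.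
Proof.
elim/last_ind: w => [|u b IH]; first by rewrite /= -cardE (rreg_card hg).
rewrite tvalid_rcons size_rcons /= => /andP[vu hb].
rewrite parent_rcons /fresh_nbrs -cardE.
have hm : vtx (rcons u b) \in g (vtx u).
  by rewrite vtx_rcons; apply/fresh_nbrs_sub/mem_nth; rewrite IH.
have := cardsD1 (vtx u) (g (vtx (rcons u b))).
by rewrite (rreg_card hg) -(rreg_sym hg) hm add1n => ->.
Qed.

Lemma vtx_child_fresh w a :
  tvalid r (rcons w a) -> vtx (rcons w a) \in fresh_nbrs (parent w) (vtx w).
Proof.
rewrite tvalid_rcons => /andP[vw ha]; rewrite vtx_rcons; apply: mem_nth.
by rewrite size_fresh_nbrs.
Qed.

Lemma vtx_child_adj w a : tvalid r (rcons w a) -> vtx (rcons w a) \in g (vtx w).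
Proof. by move/vtx_child_fresh/fresh_nbrs_sub. Qed.

Lemma vtx_grandchild_neq u b a :
  tvalid r (rcons (rcons u b) a) -> vtx (rcons (rcons u b) a) != vtx u.
Proof. by move/vtx_child_fresh; rewrite parent_rcons mem_enum in_setD1 => /andP[]. Qed.

Lemma vtx_child_inj w a b : tvalid r (rcons w a) -> tvalid r (rcons w b) ->
  vtx (rcons w a) = vtx (rcons w b) -> a = b.
Proof.
rewrite !tvalid_rcons => /andP[vw ha] /andP[_ hb]; rewrite !vtx_rcons => e.
apply/eqP; rewrite -(nth_uniq (vtx w) (s := fresh_nbrs (parent w) (vtx w))) ?e //.
- by rewrite size_fresh_nbrs.
- by rewrite size_fresh_nbrs.
- exact: enum_uniq.
Qed.

Lemma ballS k : ball g k.+1 x = grow g (ball g k x).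
Proof. by rewrite /ball iterS. Qed.

Lemma ball_mono k k' : k <= k' -> ball g k x \subset ball g k' x.
Proof.
move=> /subnK <-; elim: (k' - k) => [|d IH] //=.
by apply: (subset_trans IH); apply/subsetP => y yA; rewrite inE yA.
Qed.

Lemma vtx_ball w : tvalid r w -> vtx w \in ball g (size w) x.
Proof.
elim/last_ind: w => [|u b IH]; first by rewrite /ball /= inE.
move=> vw; have := vw; rewrite tvalid_rcons => /andP[vu _].
rewrite size_rcons ballS /grow !inE; apply/orP; right; apply/existsP; exists (vtx u).
by rewrite IH // vtx_child_adj.
Qed.

Lemma ball_vtx k y : y \in ball g k x -> exists2 w, tball r k w & vtx w = y.
Proof.
elim: k y => [|k IH] y; first by rewrite /ball /= inE => /eqP->; exists [::].
rewrite ballS /grow !inE => /orP[/IH [w wk <-]|/existsP[z /andP[/IH [w wk <-] yz]]].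
  by exists w; rewrite ?(tball_mono _ wk).
have /andP[vw sw] := wk.
case yf: (y \in fresh_nbrs (parent w) (vtx w)).
  exists (rcons w (index y (fresh_nbrs (parent w) (vtx w)))).
    by rewrite /tball tvalid_rcons vw size_rcons -size_fresh_nbrs // index_mem yf.
  by rewrite vtx_rcons nth_index.
case/lastP: w wk vw sw yz yf => [|u b] wk vw sw yz.
  by rewrite /fresh_nbrs mem_enum /= yz.
rewrite /fresh_nbrs parent_rcons mem_enum !inE yz andbT => /negbFE/eqP->.
exists u => //; move: vw sw; rewrite tvalid_rcons size_rcons => /andP[vu _] su.
by rewrite /tball vu; lia.
Qed.

Definition walk w := [seq vtx (take i.+1 w) | i <- iota 0 (size w)].
Definition walk_steps w := steps (x :: walk w).

Lemma cons_walk w : x :: walk w = [seq vtx (take i w) | i <- iota 0 (size w).+1].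
Proof. by rewrite /walk /= take0 (iotaDl 1 0) -map_comp. Qed.

Lemma walk_stepsP w a b : (a, b) \in walk_steps w ->
  exists2 i, i < size w & a = vtx (take i w) /\ b = vtx (take i.+1 w).
Proof.
have zip_iota n m (f : nat -> 'I_N) : zip (map f (iota m n.+1)) (map f (iota m.+1 n)) =
    map (fun i => (f i, f i.+1)) (iota m n).
  by elim: n m => [|n IH] m //=; rewrite -IH.
rewrite /walk_steps /steps cons_walk /= zip_iota => /mapP[i].
by rewrite mem_iota add0n => hi [-> ->]; exists i.
Qed.

Lemma tchild_take w i : i < size w -> tchild (take i w) (take i.+1 w).
Proof. by move=> hi; rewrite (take_nth 0) // tchild_rcons. Qed.

Definition vtx_inj k := forall w1 w2,
  tball r k w1 -> tball r k w2 -> vtx w1 = vtx w2 -> w1 = w2.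
Definition vtx_adj k := forall w1 w2,
  tball r k w1 -> tball r k w2 -> vtx w2 \in g (vtx w1) -> tadj w1 w2.

Lemma vtx_new k w v :
  vtx_adj k -> tball r k.+1 w -> size w = k.+1 -> tball r k v -> vtx w != vtx v.
Proof.
case/lastP: w => [|u b] // A /andP[vw _]; rewrite size_rcons => -[su] vk.
have uk : tball r k u by move: vw; rewrite /tball tvalid_rcons su leqnn => /andP[-> _].
apply/eqP => e; have := vtx_child_adj vw; rewrite e => /(A _ _ uk vk) /orP[].
  by case/andP: vk => _ + /andP[/eqP sv _]; rewrite sv su ltnn.
by case/tchildP=> c ev; subst u; move: (vtx_grandchild_neq vw); rewrite e eqxx.
Qed.

Lemma walk_step_tchild m wa wb : vtx_inj m -> tball r m wa -> tball r m wb ->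
  (vtx wa, vtx wb) \in walk_steps wa ++ walk_steps wb -> tchild wa wb.
Proof.
move=> I Wa Wb; have step w : tball r m w -> (vtx wa, vtx wb) \in walk_steps w ->
    tchild wa wb.
  case/andP=> vw sw /walk_stepsP[i hi [ea eb]].
  have Wi j : j <= size w -> tball r m (take j w) by move=> hj; apply: tball_take; lia.
  rewrite (I _ _ Wa (Wi _ (ltnW hi)) ea) (I _ _ Wb (Wi _ hi) eb).
  exact: tchild_take.
by rewrite mem_cat => /orP[]; apply: step.
Qed.

Section TreeLike.
Variable l : nat.

Definition tree_like := forall w1 w2, tball r l w1 -> tball r l w2 ->
  vtx w2 \in g (vtx w1) ->
  ((vtx w1, vtx w2) \in walk_steps w1 ++ walk_steps w2) ||
  ((vtx w2, vtx w1) \in walk_steps w1 ++ walk_steps w2).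

Hypothesis T : tree_like.

Lemma vtx_adj_of_inj m : m <= l -> vtx_inj m -> vtx_adj m.
Proof.
move=> ml I w1 w2 W1 W2 a; have := T (tball_mono ml W1) (tball_mono ml W2) a.
case/orP=> h; apply/orP; [left | right]; apply: walk_step_tchild I _ _ _ => //.
by rewrite mem_cat orbC -mem_cat.
Qed.

Lemma vtx_parent_unique k u b v : k < l -> vtx_inj k -> vtx_adj k ->
  tvalid r (rcons u b) -> size u = k -> tball r k v ->
  vtx (rcons u b) \in g (vtx v) -> v = u.
Proof.
move=> kl I A vw su vk a.
have wk : tball r k.+1 (rcons u b) by rewrite /tball vw size_rcons su leqnn.
have uk : tball r k u by move: vw; rewrite /tball tvalid_rcons su leqnn => /andP[-> _].
have new v' : tball r k v' -> vtx v' != vtx (rcons u b).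
  by move=> ?; rewrite eq_sym (vtx_new A wk) // size_rcons su.
have at_new c d : (c, d) \in walk_steps v ++ walk_steps (rcons u b) ->
    (c == vtx (rcons u b)) || (d == vtx (rcons u b)) ->
    c = vtx u /\ d = vtx (rcons u b).
  rewrite mem_cat => /orP[] /walk_stepsP[i hi [-> ->]].
    by rewrite !(negbTE (new _ _)) //; apply: tball_take; case/andP: vk => // _; lia.
  have [ik | ->] : i < k \/ i = k by move: hi; rewrite size_rcons; lia.
    by rewrite !(negbTE (new _ _)) //; apply: tball_take; case/andP: wk => // _; lia.
  by rewrite -su -cats1 take_size_cat // take_oversize // size_cat /= addn1.
have := T (tball_mono kl (tball_mono (leqnSn k) vk)) (tball_mono kl wk) a.
case/orP=> /at_new; rewrite eqxx ?orbT => /(_ isT) [e1 e2].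
  exact: I.
by move: (new _ uk); rewrite -e1 eqxx.
Qed.

Lemma vtx_inj_step k : k < l -> vtx_inj k -> vtx_adj k -> vtx_inj k.+1.
Proof.
move=> kl I A w1 w2 W1 W2 e.
have Wk w : tball r k.+1 w -> size w != k.+1 -> tball r k w.
  by case/andP=> vw sw sk; rewrite /tball vw; lia.
case s1: (size w1 == k.+1); case s2: (size w2 == k.+1).
- move: W1 W2 e s1 s2; case/lastP: w1 => [|u1 b1] //; case/lastP: w2 => [|u2 b2] //.
  rewrite !size_rcons !eqSS => /andP[vw1 _] /andP[vw2 _] e /eqP s1 /eqP s2.
  have u2k : tball r k u2.
    by move: vw2; rewrite /tball tvalid_rcons s2 leqnn => /andP[-> _].
  have eu : u2 = u1.
    by apply: (vtx_parent_unique kl I A vw1 s1 u2k); rewrite e vtx_child_adj.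
  by subst u2; rewrite (vtx_child_inj vw1 vw2 e).
- by move: (vtx_new A W1 (eqP s1) (Wk _ W2 (negbT s2))); rewrite e eqxx.
- by move: (vtx_new A W2 (eqP s2) (Wk _ W1 (negbT s1))); rewrite e eqxx.
- exact: I (Wk _ W1 (negbT s1)) (Wk _ W2 (negbT s2)) e.
Qed.

Lemma vtx_inj_upto k : k <= l -> vtx_inj k.
Proof.
elim: k => [_ | k IH kl].
  have nil w : tball r 0 w -> w = [::] by case: w => // ? ?; rewrite /tball andbF.
  by move=> w1 w2 /nil -> /nil ->.
have I := IH (ltnW kl).
exact: vtx_inj_step kl I (vtx_adj_of_inj (ltnW kl) I).
Qed.

Lemma good_of_tree_like : good r g l x.
Proof.
have I := vtx_inj_upto (leqnn l); have A := vtx_adj_of_inj (leqnn l) I.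
have inv y : exists w, y \in ball g l x -> tball r l w /\ vtx w = y.
  case yb: (y \in ball g l x); last by exists [::].
  by have [w wl e] := ball_vtx yb; exists w.
have [f hf] := choice inv.
have in_ball w : tball r l w -> vtx w \in ball g l x.
  by case/andP=> vw sw; apply: (subsetP (ball_mono sw)); apply: vtx_ball.
exists f; split.
- have [W0 e0] := hf x (in_ball [::] isT).
  exact: I.
- by move=> y z /hf[_ ey] /hf[_ ez] e; rewrite -ey -ez e.
- by move=> y /hf[].
- move=> w vw sw; have Ww : tball r l w by rewrite /tball vw.
  by exists (vtx w); [apply: in_ball | have [? ?] := hf _ (in_ball _ Ww); apply: I].
- move=> y z /hf[Wy ey] /hf[Wz ez].
  rewrite -[in LHS]ey -[in LHS]ez; apply/idP/idP; first exact: A.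
  case/orP=> /tchildP[c ec].
    by rewrite ec vtx_child_adj //; case/andP: Wz; rewrite ec.
  by rewrite (rreg_sym hg) ec vtx_child_adj //; case/andP: Wy; rewrite ec.
Qed.

End TreeLike.

Lemma not_good_witness l : ~ good r g l x -> exists w1 w2,
  [/\ tball r l w1, tball r l w2, vtx w2 \in g (vtx w1),
      (vtx w1, vtx w2) \notin walk_steps w1 ++ walk_steps w2 &
      (vtx w2, vtx w1) \notin walk_steps w1 ++ walk_steps w2].
Proof.
move=> ng; apply: contra_notP ng => nw; apply: good_of_tree_like => w1 w2 W1 W2 a.
apply/negPn/negP; rewrite negb_or => /andP[n1 n2]; apply: nw; by exists w1, w2.
Qed.

Lemma size_walk w : size (walk w) == size w.
Proof. by rewrite size_map size_iota. Qed.

Lemma nth_cons_walk w i : i <= size w -> nth x (x :: walk w) i = vtx (take i w).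
Proof. by move=> hi; rewrite cons_walk (nth_map 0) ?size_iota ?nth_iota. Qed.

Lemma last_walk w : last x (walk w) = vtx w.
Proof.
by rewrite -[LHS]/(last x (x :: walk w)) -nth_last /= (eqP (size_walk w)) nth_cons_walk
  ?take_size.
Qed.

Lemma nonbacktracking_walk w : tvalid r w -> nonbacktracking (x :: walk w).
Proof.
move=> vw; apply: (nonbacktracking_nth (x0 := x)) => i.
rewrite [size _]/= (eqP (size_walk w)) !ltnS => hi.
rewrite !nth_cons_walk ?(ltnW (ltnW hi)) // (take_nth 0) // (take_nth 0 (ltnW hi)).
by apply: vtx_grandchild_neq; rewrite -!(take_nth 0) ?tvalid_take // ltnW.
Qed.

Lemma walk_edges w : tvalid r w -> has_edges g (walk_steps w).
Proof.
move=> vw; apply/allP => -[a b] /walk_stepsP[i hi [-> ->]] /=.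
by rewrite (take_nth 0) // vtx_child_adj // -(take_nth 0) // tvalid_take.
Qed.

End Exploration.

(** * Counting non-backtracking walks *)

Lemma sum_tupleS (T : finType) n (F : n.+1.-tuple T -> nat) :
  \sum_(t : n.+1.-tuple T) F t = \sum_(a : T) \sum_(t : n.-tuple T) F [tuple of a :: t].
Proof.
rewrite pair_big /= (reindex (fun p : T * n.-tuple T => [tuple of p.1 :: p.2])) //=.
exists (fun t : n.+1.-tuple T => (thead t, [tuple of behead t])).
  by move=> [a t] _ /=; rewrite theadE; congr (_, _); apply: val_inj.
by move=> t _ /=; rewrite -tuple_eta.
Qed.

Lemma sum_tuple0 (T : finType) (F : 0.-tuple T -> nat) :
  \sum_(t : 0.-tuple T) F t = F [tuple].
Proof. by rewrite (big_pred1 [tuple]) // => t; rewrite [t]tuple0; apply/esym/eqP. Qed.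

Lemma nonbacktracking_cons3 (T : eqType) (a b c : T) s :
  nonbacktracking [:: a, b, c & s] = (c != a) && nonbacktracking [:: b, c & s].
Proof. by []. Qed.

Lemma has_edges_cons2 N (g : graph N) a b s :
  has_edges g (steps [:: a, b & s]) = (b \in g a) && has_edges g (steps (b :: s)).
Proof. by []. Qed.

Definition nbwalk N (g : graph N) x (t : seq 'I_N) :=
  nonbacktracking (x :: t) && has_edges g (steps (x :: t)).

Section WalkCount.
Variables (N r : nat) (g : graph N).
Hypothesis hg : rreg r g.

(* [z] is the vertex the walk [y :: t] arrives from: its first step may not
   go back to [z]. *)
Definition count_nbwalks (z y : 'I_N) p :=
  \sum_(t : p.-tuple 'I_N)
    (nonbacktracking [:: z, y & t] && has_edges g (steps (y :: t)) : nat).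

Lemma count_nbwalksS z y p :
  count_nbwalks z y p.+1 = \sum_(b in g y :\ z) count_nbwalks y b p.
Proof.
rewrite /count_nbwalks sum_tupleS [RHS]big_mkcond; apply: eq_bigr => b _.
rewrite !inE; case: ifP => [/andP[bz byy] | nb].
  by apply: eq_bigr => t _; rewrite nonbacktracking_cons3 has_edges_cons2 bz byy.
apply: big1 => t _; rewrite nonbacktracking_cons3 has_edges_cons2.
by move: nb; case: (b != z); case: (b \in g y); rewrite //= andbF.
Qed.

Lemma count_nbwalks_le p z y : z \in g y -> count_nbwalks z y p <= (r - 1) ^ p.
Proof.
elim: p z y => [|p IH] z y zy; first by rewrite /count_nbwalks sum_tuple0 leq_b1.
rewrite count_nbwalksS; apply: leq_trans (_ : \sum_(b in g y :\ z) (r - 1) ^ p <= _).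
  by apply: leq_sum => b; rewrite inE => /andP[_ hb]; apply: IH; rewrite (rreg_sym hg).
rewrite sum_nat_const expnS leq_mul2r; apply/orP; right.
by have := cardsD1 z (g y); rewrite zy (rreg_card hg) add1n => ->; rewrite subn1.
Qed.

Lemma card_nbwalks_le x p : 1 < r ->
  \sum_(t : p.-tuple 'I_N) nbwalk g x t <= r * (r - 1) ^ p.
Proof.
case: p => [|p] r1.
  by rewrite sum_tuple0 expn0 muln1 (leq_trans (leq_b1 _)) // ltnW.
have -> : \sum_(t : p.+1.-tuple 'I_N) nbwalk g x t =
          \sum_(b in g x) count_nbwalks x b p.
  rewrite sum_tupleS [RHS]big_mkcond; apply: eq_bigr => b _; case: ifP => bx.
    by apply: eq_bigr => t _; rewrite /nbwalk has_edges_cons2 bx.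
  by apply: big1 => t _; rewrite /nbwalk has_edges_cons2 bx andbF.
apply: leq_trans (_ : \sum_(b in g x) (r - 1) ^ p <= _).
  by apply: leq_sum => b bx; apply: count_nbwalks_le; rewrite (rreg_sym hg).
by rewrite sum_nat_const (rreg_card hg) expnS leq_mul2l leq_pmull ?orbT // subn_gt0.
Qed.

End WalkCount.

(** * The first moment of the number of bad vertices *)

Lemma leq_term_sum (I : finType) (F : I -> nat) i : F i <= \sum_j F j.
Proof. by rewrite (bigD1 i) //= leq_addr. Qed.

Lemma has_edges_cat N (g : graph N) s1 s2 :
  has_edges g (s1 ++ s2) = has_edges g s1 && has_edges g s2.
Proof. exact: all_cat. Qed.

Lemma size_steps (T : Type) (s : seq T) : size (steps s) = (size s).-1.
Proof. by rewrite size_zip size_behead minnE subKn // leq_pred. Qed.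

Definition pair_steps N (x : 'I_N) t1 t2 := steps (x :: t1) ++ steps (x :: t2).

Definition walk_pair N (g : graph N) x t1 t2 := [&& nbwalk g x t1 & nbwalk g x t2].

Definition bad_pair N (g : graph N) x t1 t2 :=
  [&& walk_pair g x t1 t2, last x t2 \in g (last x t1),
      (last x t1, last x t2) \notin pair_steps x t1 t2 &
      (last x t2, last x t1) \notin pair_steps x t1 t2].

Definition rgraphs N r := [set g : graph N | rreg r g].

Section FirstMoment.
Variables (N r l : nat).

Definition walk_sum (F : 'I_N -> seq 'I_N -> seq 'I_N -> nat) :=
  \sum_x \sum_(p < l.+1) \sum_(q < l.+1)
    \sum_(t1 : p.-tuple 'I_N) \sum_(t2 : q.-tuple 'I_N) F x t1 t2.

Lemma leq_walk_sum F G :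
  (forall x t1 t2, size t1 <= l -> size t2 <= l -> F x t1 t2 <= G x t1 t2) ->
  walk_sum F <= walk_sum G.
Proof.
move=> FG; apply: leq_sum => x _; apply: leq_sum => p _; apply: leq_sum => q _.
by do 2!(apply: leq_sum => ? _); apply: FG; rewrite size_tuple -ltnS ltn_ord.
Qed.

Lemma walk_sum_distr c F : c * walk_sum F = walk_sum (fun x t1 t2 => c * F x t1 t2).
Proof. by rewrite big_distrr; do 4!(apply: eq_bigr => ? _; rewrite big_distrr). Qed.

Lemma exchange_walk_sum (A : {pred graph N}) F :
  \sum_(g in A) walk_sum (F g) = walk_sum (fun x t1 t2 => \sum_(g in A) F g x t1 t2).
Proof.
rewrite exchange_big; do 3!(apply: eq_bigr => ? _; rewrite exchange_big).
by apply: eq_bigr => ? _; rewrite exchange_big.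
Qed.

Lemma bad_vertex_pair g x : rreg r g -> x \in bad_set r g l ->
  0 < \sum_(p < l.+1) \sum_(q < l.+1)
        \sum_(t1 : p.-tuple 'I_N) \sum_(t2 : q.-tuple 'I_N) bad_pair g x t1 t2.
Proof.
move=> hg; rewrite inE => /asboolP/(not_good_witness hg)[w1 [w2 [W1 W2 a n1 n2]]].
case/andP: W1 W2 => [v1 h1] /andP[v2 h2]; rewrite -ltnS in h1; rewrite -ltnS in h2.
apply: leq_trans _ (leq_term_sum _ (Ordinal h1)).
apply: leq_trans _ (leq_term_sum _ (Ordinal h2)).
apply: leq_trans _ (leq_term_sum _ (Tuple (size_walk g x w1))).
apply: leq_trans _ (leq_term_sum _ (Tuple (size_walk g x w2))).
rewrite lt0b /bad_pair /walk_pair /nbwalk !last_walk a n1 n2 !andbT.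
by rewrite !(nonbacktracking_walk _ hg) ?(walk_edges _ hg).
Qed.

Lemma card_bad_le g : rreg r g ->
  #|bad_set r g l| <= walk_sum (fun x t1 t2 => bad_pair g x t1 t2).
Proof.
move=> hg; rewrite -sum1_card /walk_sum [X in _ <= X](bigID (mem (bad_set r g l))) /=.
by apply: leq_trans (leq_addr _ _); apply: leq_sum => x; apply: bad_vertex_pair.
Qed.

Lemma switching_pair x (t1 t2 : seq 'I_N) : 0 < r -> size t1 <= l -> size t2 <= l ->
  2 * (2 * ((r + 2) * r) + 2 * (2 * l)) <= r * N ->
  N * \sum_(g in rgraphs N r) bad_pair g x t1 t2 <=
  2 * r * \sum_(g in rgraphs N r) walk_pair g x t1 t2.
Proof.
move=> r0 s1 s2 hN; set P := pair_steps x t1 t2; set u := last x t1; set v := last x t2.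
have walk_pairE g : walk_pair g x t1 t2 =
    [&& nonbacktracking (x :: t1), nonbacktracking (x :: t2) & has_edges g P].
  by rewrite /walk_pair /nbwalk has_edges_cat andbACA -!andbA.
case C: [&& nonbacktracking (x :: t1), nonbacktracking (x :: t2), (u, v) \notin P &
            (v, u) \notin P]; last first.
  rewrite big1 ?muln0 // => g _; apply/eqP; rewrite eqb0; apply: contraFN C.
  by rewrite /bad_pair walk_pairE => /and4P[/and3P[-> -> _] _ -> ->].
case/and4P: C => nb1 nb2 uv vu.
have -> : \sum_(g in rgraphs N r) bad_pair g x t1 t2 = #|graphs_with_edge r P u v|.
  rewrite -sum1_card big_mkcond [RHS]big_mkcond; apply: eq_bigr => g _.
  by rewrite !inE /bad_pair walk_pairE nb1 nb2 uv vu !andbT; case: (rreg r g).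
apply: leq_trans (card_graphs_with_edge_le uv vu r0 _) _.
  by rewrite size_cat !size_steps /=; lia.
rewrite leq_mul2l -sum1_card big_mkcond [X in _ <= X]big_mkcond; apply/orP; right.
by apply: leq_sum => g _; rewrite !inE walk_pairE nb1 nb2; case: (rreg r g).
Qed.

Lemma walk_sum_walk_pair_le g : rreg r g -> 1 < r ->
  walk_sum (walk_pair g) <= N * (\sum_(p < l.+1) r * (r - 1) ^ p) ^ 2.
Proof.
move=> hg r1; rewrite -[N in N * _]card_ord -sum_nat_const; apply: leq_sum => x _.
have -> : \sum_(p < l.+1) \sum_(q < l.+1) \sum_(t1 : p.-tuple 'I_N)
    \sum_(t2 : q.-tuple 'I_N) walk_pair g x t1 t2 =
    (\sum_(p < l.+1) \sum_(t1 : p.-tuple 'I_N) nbwalk g x t1) *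
    (\sum_(q < l.+1) \sum_(t2 : q.-tuple 'I_N) nbwalk g x t2).
  rewrite big_distrl; apply: eq_bigr => p _; rewrite big_distrr; apply: eq_bigr => q _.
  rewrite big_distrl; apply: eq_bigr => t1 _; rewrite big_distrr.
  by apply: eq_bigr => t2 _; rewrite /walk_pair; case: nbwalk; case: nbwalk.
by rewrite expnS expn1; apply: leq_mul; apply: leq_sum => p _; apply: card_nbwalks_le.
Qed.

Lemma sum_card_bad_le_switching : 1 < r ->
  2 * (2 * ((r + 2) * r) + 2 * (2 * l)) <= r * N ->
  \sum_(g in rgraphs N r) #|bad_set r g l| <=
  2 * r * (\sum_(p < l.+1) r * (r - 1) ^ p) ^ 2 * #|rgraphs N r|.
Proof.
move=> r1 hN; set S := \sum_(p < l.+1) _.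
have N0 : 0 < N by move: hN; case: N; rewrite ?muln0 //; lia.
rewrite -(leq_pmul2l N0); apply: leq_trans (_ : N * \sum_(g in rgraphs N r)
    walk_sum (bad_pair g) <= _).
  rewrite leq_mul2l; apply/orP; right.
  by apply: leq_sum => g; rewrite inE; apply: card_bad_le.
rewrite exchange_walk_sum walk_sum_distr.
apply: leq_trans (_ : walk_sum (fun x t1 t2 =>
    2 * r * \sum_(g in rgraphs N r) walk_pair g x t1 t2) <= _).
  by apply: leq_walk_sum => x t1 t2 s1 s2; apply: switching_pair; rewrite // ltnW.
rewrite -walk_sum_distr -exchange_walk_sum.
apply: leq_trans (_ : 2 * r * \sum_(g in rgraphs N r) N * S ^ 2 <= _).
  by rewrite leq_mul2l; apply/orP; right; apply: leq_sum => g; rewrite inE => hg;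
    apply: walk_sum_walk_pair_le.
by rewrite sum_nat_const; apply: eq_leq; ring.
Qed.

End FirstMoment.

Lemma sum_expn_le q l : 1 < q -> \sum_(p < l.+1) q ^ p <= 2 * q ^ l.
Proof.
move=> q1; elim: l => [|l IH]; first by rewrite big_ord1.
rewrite big_ord_recr /= expnS; move: IH; set S := \sum_(i < l.+1) _; nia.
Qed.

(* When the switching bound does not apply, N itself is O((r-1)^(2l)). *)
Lemma order_small_le N r l : 2 < r ->
  r * N < 2 * (2 * ((r + 2) * r) + 2 * (2 * l)) ->
  N <= (4 * r + 16) * (r - 1) ^ (2 * l).
Proof.
move=> r2 hN.
have h1 : 2 * l < (r - 1) ^ (2 * l) by apply: ltn_expl; lia.
have h2 : 0 < (r - 1) ^ (2 * l) by rewrite expn_gt0; lia.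
move: h1 h2; set X := (r - 1) ^ (2 * l); nia.
Qed.

Lemma sum_card_bad_le N r l : 2 < r ->
  \sum_(g in rgraphs N r) #|bad_set r g l| <=
  (8 * r ^ 3 + 4 * r + 16) * (r - 1) ^ (2 * l) * #|rgraphs N r|.
Proof.
move=> r2; have [hN | hN] := leqP (2 * (2 * ((r + 2) * r) + 2 * (2 * l))) (r * N).
  apply: leq_trans (sum_card_bad_le_switching (ltnW r2) hN) _; rewrite leq_mul2r.
  apply/orP; right.
  have hS : \sum_(p < l.+1) r * (r - 1) ^ p <= r * (2 * (r - 1) ^ l).
    by rewrite -big_distrr leq_mul2l sum_expn_le ?orbT //; lia.
  have := leq_mul hS hS; rewrite [2 * l]mulnC expnM.
  move: (\sum_(p < l.+1) _) ((r - 1) ^ l) => S Y hS2; nia.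
apply: leq_trans (_ : \sum_(g in rgraphs N r) N <= _).
  by apply: leq_sum => g _; rewrite -[N in _ <= N]card_ord max_card.
rewrite sum_nat_const mulnC leq_mul2r (leq_trans (order_small_le r2 hN)) ?orbT //.
by rewrite leq_mul2r; apply/orP; right; lia.
Qed.

Local Open Scope ring_scope.

Lemma markov_count (R : numDomainType) (T : finType) (P : pred T) (X : T -> nat)
    (a : R) : 0 < a ->
  #|[set t | P t && (a <= (X t)%:R)]|%:R * a <= (\sum_(t | P t) X t)%:R.
Proof.
move=> a0; rewrite -sum1dep_card natr_sum mulr_suml natr_sum.
rewrite [X in _ <= X](bigID (fun t => a <= (X t)%:R)) /= -[X in X <= _]addr0.
apply: lerD; last by apply: sumr_ge0.
by apply: ler_sum => t /andP[_ ha]; rewrite mul1r.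
Qed.

Lemma threshold_mulXn (R : numFieldType) r l : (1 < r)%N ->
  r%:R ^+ 2 * (r - 1)%:R ^ (2 * l%:Z - 2) * (r - 1)%:R ^+ 2 =
  (r ^ 2 * (r - 1) ^ (2 * l))%N%:R :> R.
Proof.
move=> r1; have q0 : (r - 1)%:R != 0 :> R by rewrite pnatr_eq0 -lt0n subn_gt0.
rewrite -mulrA [(r - 1)%:R ^+ 2]exprnP -exprzDr ?unitfE // subrK natrM !natrX.
by rewrite -(PoszM 2) -exprnP.
Qed.

Lemma sum_card_bad_le_threshold (R : realFieldType) N r l : (2 < r)%N ->
  (\sum_(g : graph N | rreg r g) #|bad_set r g l|)%N%:R <=
  r%:R ^+ 2 * (r - 1)%:R ^ (2 * l%:Z - 2) *
  ((8 * r ^ 3 + 4 * r + 16) * (r - 1) ^ 2)%N%:R * #|rgraphs N r|%:R :> R.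
Proof.
move=> r2; set C := (8 * r ^ 3 + 4 * r + 16)%N.
have -> : (\sum_(g : graph N | rreg r g) #|bad_set r g l| =
           \sum_(g in rgraphs N r) #|bad_set r g l|)%N.
  by apply: eq_bigl => g; rewrite inE.
apply: le_trans (_ : (C * (r ^ 2 * (r - 1) ^ (2 * l)) * #|rgraphs N r|)%N%:R <= _).
  rewrite ler_nat (leq_trans (sum_card_bad_le _ _ _)) // mulnA leq_mul2r.
  by apply/orP; right; rewrite -mulnA leq_mul2l leq_pmull ?orbT // expn_gt0; lia.
rewrite natrM [(C * _)%:R]natrM -threshold_mulXn 1?ltnW // natrM natrX; lra.
Qed.

Theorem lemma4p2 (R : realType) (r : nat) (hr : (3 <= r)%N) (l : nat -> nat) :
  exists K2 : R, forall (N : nat), ~~ odd N ->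
    ((r - 1) ^ l N < 5 * N)%N ->
    forall z : R, 0 < z ->
      Prob R r (fun g : graph N =>
        (r%:R ^+ 2 * (r - 1)%:R ^ (2 * (l N)%:Z - 2) * z
           <= #|bad_set r g (l N)|%:R)) <= K2 / z.
Proof.
exists ((8 * r ^ 3 + 4 * r + 16) * (r - 1) ^ 2)%N%:R => N _ _ z z0.
set T := _ * _ ^ _; set K := _%:R.
have T0 : 0 < T by rewrite mulr_gt0 ?exprn_gt0 ?exprz_gt0 ?ltr0n //; lia.
rewrite /Prob; case: (posnP #|rgraphs N r|) => [M0 | M0].
  by rewrite /rgraphs in M0; rewrite M0 invr0 mulr0 divr_ge0 ?ler0n // ltW.
rewrite ler_pdivrMr ?ltr0n // [X in _ <= X]mulrAC ler_pdivlMr // -(ler_pM2l T0) mulrCA.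
apply: le_trans (markov_count _ _ (mulr_gt0 T0 z0)) _.
by rewrite mulrA; exact: sum_card_bad_le_threshold.
Qed.
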